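(* Consider a 3-S 3-D MUN-D (as in the context) in which the min-cut between $S_i$ and $T_j$ is at least $1$ for all $i,j\in\{1,2,3\}$. Let $n=2n'+1$, let $\alpha\in\mathbb{F}_{p^m}$ have multiplicative order $n$, regard the LECs $\underline{\varepsilon}$ as indeterminates, and for $i,j\in\{1,2,3\}$ let $\hat M_{ij}=\mathrm{diag}\big(M_{ij}(\alpha^0),M_{ij}(\alpha^1),\dots,M_{ij}(\alpha^{n-1})\big)$. Then $\det \hat M_{ij}$ is a nonzero polynomial in $\underline{\varepsilon}$ for all $i,j\in\{1,2,3\}$.
   Context: A three-source three-destination multiple unicast network with delays (3-S 3-D MUN-D) is a finite directed acyclic graph whose links each carry one symbol of $\mathbb{F}_{p^m}$ per time unit with unit delay, with sources $S_1,S_2,S_3$ each generating one process and destinations $T_1,T_2,T_3$ each with one output, $T_i$ demanding the process of $S_i$; the min-cut between $S_i$ and $T_i$ is $1$. Linear network coding with time-invariant local encoding coefficients (LECs) $\underline{\varepsilon}$ is used: a link's symbol at time $t+1$ is an LEC-weighted sum of the source symbol (if its tail is a source) and of the symbols on incoming links of its tail at time $t$, and $T_j$'s output at time $t+1$ is an LEC-weighted sum of its incoming link symbols at time $t$. The resulting transfer function from $S_i$ to $T_j$ is $D^{d'_{min}}M_{ij}(D)$ with $M_{ij}(D)=\sum_{d=0}^{d_{max}}M_{ij}^{(d)}D^d$, where $d'_{min}$ is the minimum path delay over all source-destination pairs and the coefficients $M_{ij}^{(d)}$ are polynomials in $\underline{\varepsilon}$. *)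

From HB Require Import structures.
From mathcomp Require Import all_boot all_order all_algebra all_field.
From mathcomp Require Import mpoly.
Set Implicit Arguments. Unset Strict Implicit. Unset Printing Implicit Defensive.
Import GRing.Theory.
Local Open Scope ring_scope.

Section Network.
Variables (V E : finType) (tl hd : E -> V).

Definition is_path (u v : V) (s : seq E) : bool :=
  if s is e :: s' then
    [&& tl e == u, path (fun a b => hd a == tl b) e s' & hd (last e s') == v]
  else false.

Definition acyclic : Prop := forall (u : V) (s : seq E), ~~ is_path u u s.

Definition cuts (C : {set E}) (u v : V) : Prop :=
  forall s : seq E, is_path u v s -> has (fun e => e \in C) s.

(* "the min-cut between u and v (unit link capacities) equals k":
   k is the least size of a link set cutting u from v *)
Definition is_mincut (u v : V) (k : nat) : Prop :=
  (exists C : {set E}, cuts C u v /\ #|C| = k) /\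
  (forall C : {set E}, cuts C u v -> (k <= #|C|)%N).

(* Local encoding coefficients:
   inl (inl (i,e))  : source S_i -> link e   (meaningful when tl e = S_i)
   inl (inr (e,f))  : link e -> link f       (meaningful when hd e = tl f)
   inr (e,j)        : link e -> output of T_j (meaningful when hd e = T_j) *)
Definition LEC : finType := (('I_3 * E) + (E * E) + (E * 'I_3))%type.

Variable F : fieldType.
Notation R := {mpoly F[#|{: LEC}|]}.

Definition eps (l : LEC) : R := 'X_(enum_rank l).

Variables (S T : 'I_3 -> V).

Definition path_gain (i j : 'I_3) (s : seq E) : R :=
  if s is e :: s' then
    eps (inl (inl (i, e)))
    * \prod_(p <- zip s (behead s)) eps (inl (inr p))
    * eps (inr (last e s', j))
  else 0.

(* A path with k.+1 links has delay k.+2 (one unit per link, one at T_j).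
   In a DAG every path has at most #|E| links. *)
Definition transfer (i j : 'I_3) : {poly R} :=
  \sum_(k < #|E|) \sum_(t : k.+1.-tuple E | is_path (S i) (T j) t)
     (path_gain i j t)%:P * 'X^(k.+2).

Definition dmin : nat :=
  \big[minn/#|E|.+2]_(i : 'I_3) \big[minn/#|E|.+2]_(j : 'I_3)
   \big[minn/#|E|.+2]_(k < #|E|)
    \big[minn/#|E|.+2]_(t : k.+1.-tuple E | is_path (S i) (T j) t) k.+2.

(* transfer i j = D^dmin * M i j *)
Definition Mtf (i j : 'I_3) : {poly R} := drop_poly dmin (transfer i j).

Definition Mhat (n : nat) (alpha : F) (i j : 'I_3) : 'M[R]_n :=
  diag_mx (\row_(a < n) (Mtf i j).[(alpha ^+ a)%:MP]).

End Network.

From HB Require Import structures.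
From mathcomp Require Import all_boot all_order all_algebra all_field.
From mathcomp Require Import mpoly.
From Stdlib Require Import Classical.
Set Implicit Arguments. Unset Strict Implicit. Unset Printing Implicit Defensive.
Import GRing.Theory.
Local Open Scope ring_scope.

(* Each entry of the diagonal matrix is M_ij(alpha^a), and alpha^a != 0 since
   alpha is a root of unity.  Specialize the LECs to 1 on one fixed path s from
   S_i to T_j and to 0 elsewhere: in a DAG s is the only path whose LECs are all
   1, so the transfer function becomes D^(|s|+1) and M_ij becomes the monomial
   D^(|s|+1-d'_min), which does not vanish at alpha^a.  Hence no entry, and so
   not the determinant, is the zero polynomial. *)

Lemma mem_zipl (X Y : eqType) (s : seq X) (t : seq Y) x y :
  (x, y) \in zip s t -> x \in s.
Proof.
elim: s t => [|a s IH] [|b t] //= /predU1P[[-> _]|/IH xs].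
  exact: mem_head.
by rewrite in_cons xs orbT.
Qed.

(* A uniq sequence has a unique successor relation, so a walk from its head that
   only follows it, and stops at its last element, retraces it exactly. *)
Lemma eq_uniq_succ_walk (X : eqType) (e : X) (t s : seq X) :
  uniq (e :: t) -> uniq (e :: s) ->
  {subset zip (e :: t) t <= zip (e :: s) s} -> last e t = last e s -> t = s.
Proof.
elim: t e s => [|f t IH] e s ut us sub.
  by case: s us {sub} => [//|x s] /= /andP[es _] ex; rewrite ex mem_last in es.
have /sub : (e, f) \in zip (e :: f :: t) (f :: t) by exact: mem_head.
case: s us sub => [//|x s] us sub /predU1P[[fx]|/mem_zipl es]; last first.
  by rewrite /= es in us.
subst x => lts; congr (_ :: _); apply: IH lts.
- by case/andP: ut.
- by case/andP: us.
move=> q qt; have /sub : q \in zip (e :: f :: t) (f :: t) by rewrite in_cons qt orbT.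
case/predU1P => [qe|//]; move: ut qt; rewrite qe /= => /andP[et _] /mem_zipl.
by move=> ef; rewrite ef in et.
Qed.

Lemma bigminn_leq (I : finType) (j : I) (x0 y : nat) (P : pred I) (F : I -> nat) :
  P j -> (F j <= y)%N -> (\big[minn/x0]_(i | P i) F i <= y)%N.
Proof.
move=> Pj /(leq_trans _); apply; have := mem_index_enum j.
elim: (index_enum I) => // a r IH; rewrite inE big_cons.
case/orP => [/eqP<-|jr]; first by rewrite Pj geq_minl.
by case: (P a); rewrite ?geq_min IH ?orbT.
Qed.

Lemma prod_nat_of_bool (I : Type) (r : seq I) (b : pred I) :
  (\prod_(x <- r) b x)%N = all b r.
Proof.
have andb_mul : {morph nat_of_bool : x y / x && y >-> (x * y)%N} by case; case.
by rewrite -big_all (big_morph _ andb_mul (erefl : nat_of_bool true = 1%N)).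
Qed.

Lemma prim_root_neq0 (F : fieldType) (n : nat) (z : F) :
  n.-primitive_root z -> z != 0.
Proof.
move=> prim; apply: contra_eq_neq (prim_expr_order prim) => ->.
by rewrite expr0n gtn_eqF ?(prim_order_gt0 prim) // eq_sym oner_eq0.
Qed.

Lemma map_drop_poly (R S : nzSemiRingType) (f : {additive R -> S}) d p :
  map_poly f (drop_poly d p) = drop_poly d (map_poly f p).
Proof. by apply/polyP => k; rewrite coef_map !coef_drop_poly coef_map. Qed.

Section Network.

Variables (V E : finType) (tl hd : E -> V).

Lemma mincut_path (u v : V) (k : nat) :
  is_mincut tl hd u v k -> (0 < k)%N -> exists s, is_path tl hd u v s.
Proof.
move=> [_ cut_min] k_gt0; apply: NNPP => no_path.
have cut0 : cuts tl hd set0 u v by move=> s us; case: no_path; exists s.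
by have := cut_min _ cut0; rewrite cards0 leqn0 => /eqP k0; rewrite k0 in k_gt0.
Qed.

Hypothesis acyc : acyclic tl hd.

Lemma acyclic_path_uniq (u v : V) (s : seq E) : is_path tl hd u v s -> uniq s.
Proof.
elim: s u => [//|e s IH] u /= /and3P[_ pth hl]; apply/andP; split.
  apply/negP => es; move: pth hl; case/splitPr: es => s1 s2.
  rewrite cat_path /= => /andP[p1 /andP[h _]] _.
  by have := acyc (tl e) (e :: s1); rewrite /= eqxx p1 h.
case: s IH pth hl => [//|f s] IH /= /andP[_ pth] hl.
by apply: (IH (tl f)); rewrite /= eqxx pth.
Qed.

Lemma acyclic_path_size (u v : V) (s : seq E) :
  is_path tl hd u v s -> (size s <= #|E|)%N.
Proof. by move/acyclic_path_uniq/card_uniqP <-; exact: max_card. Qed.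

Variables (F : fieldType) (S T : 'I_3 -> V).

Definition path_lec (i j : 'I_3) (e : E) (s : seq E) (l : LEC E) : bool :=
  match l with
  | inl (inl (i', e')) => (i' == i) && (e' == e)
  | inl (inr p) => p \in zip (e :: s) s
  | inr (e', j') => (e' == last e s) && (j' == j)
  end.

Definition lec_indicator (A : pred (LEC E)) (x : 'I_#|{: LEC E}|) : F :=
  (A (enum_val x))%:R.

Lemma meval_eps_indicator (A : pred (LEC E)) (l : LEC E) :
  meval (lec_indicator A) (eps F l) = (A l)%:R.
Proof. by rewrite mevalXU /lec_indicator enum_rankK. Qed.

Lemma meval_path_gain_indicator (A : pred (LEC E)) i j e s :
  meval (lec_indicator A) (path_gain F i j (e :: s)) =
  [&& A (inl (inl (i, e))), all (fun p => A (inl (inr p))) (zip (e :: s) s)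
    & A (inr (last e s, j))]%:R.
Proof.
rewrite /path_gain /= !rmorphM rmorph_prod /= !meval_eps_indicator.
under eq_bigr do rewrite meval_eps_indicator.
by rewrite -natr_prod prod_nat_of_bool -!natrM !mulnb andbA.
Qed.

Lemma path_gain_on_path i j e s t :
  is_path tl hd (S i) (T j) (e :: s) -> is_path tl hd (S i) (T j) t ->
  meval (lec_indicator (path_lec i j e s)) (path_gain F i j t) = (t == e :: s)%:R.
Proof.
case: t => [//|f t] es ft.
rewrite meval_path_gain_indicator; congr ((nat_of_bool _)%:R).
apply/idP/eqP => [|[-> ->]]; last by rewrite /= !eqxx /= andbT; apply/allP.
case/and3P => /andP[_ /eqP fe] /allP sub /andP[/eqP lst _]; subst f; congr (_ :: _).
exact: eq_uniq_succ_walk (acyclic_path_uniq ft) (acyclic_path_uniq es) sub lst.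
Qed.

Lemma transfer_on_path i j e s :
  is_path tl hd (S i) (T j) (e :: s) ->
  map_poly (meval (lec_indicator (path_lec i j e s))) (transfer tl hd F S T i j)
  = 'X^((size s).+2).
Proof.
move=> es; set v := lec_indicator _.
pose k0 : 'I_#|E| := Ordinal (acyclic_path_size es).
pose t0 : k0.+1.-tuple E := in_tuple (e :: s).
have term k (t : k.+1.-tuple E) : is_path tl hd (S i) (T j) t ->
    map_poly (meval v) ((path_gain F i j t)%:P * 'X^(k.+2))
    = (tval t == e :: s)%:R * 'X^(k.+2).
  by move=> pt; rewrite rmorphM /= map_polyC map_polyXn /= path_gain_on_path ?rmorph_nat.
rewrite /transfer rmorph_sum (bigD1 k0) //= [X in _ + X]big1 ?addr0 => [|k nk].
  rewrite rmorph_sum (bigD1 t0) //= [X in _ + X]big1 ?addr0 => [|t /andP[pt nt]].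
    by rewrite (term _ t0 es) eqxx mul1r.
  rewrite (term _ _ pt) (_ : (tval t == _) = false) ?mul0r //.
  by apply: contraNF nt => /eqP ts; apply/eqP/val_inj.
rewrite rmorph_sum big1 // => t pt.
rewrite /= (term _ _ pt) (_ : (tval t == _) = false) ?mul0r //.
apply: contraNF nk => /eqP ts; apply/eqP/val_inj => /=.
by have := size_tuple t; rewrite ts => -[].
Qed.

Lemma dmin_leq_path i j e s :
  is_path tl hd (S i) (T j) (e :: s) -> (dmin tl hd S T <= (size s).+2)%N.
Proof.
move=> es; pose k0 : 'I_#|E| := Ordinal (acyclic_path_size es).
apply: (@bigminn_leq _ i) => //; apply: (@bigminn_leq _ j) => //.
apply: (@bigminn_leq _ k0) => //; exact: (@bigminn_leq _ (in_tuple (e :: s))).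
Qed.

Lemma Mtf_on_path i j e s :
  is_path tl hd (S i) (T j) (e :: s) ->
  map_poly (meval (lec_indicator (path_lec i j e s))) (Mtf tl hd F S T i j)
  = 'X^((size s).+2 - dmin tl hd S T).
Proof.
move=> es; rewrite /Mtf map_drop_poly transfer_on_path //.
by rewrite -{1}(subnK (dmin_leq_path es)) exprD drop_polyMXn_id.
Qed.

End Network.

Theorem lemma3 (p m : nat) (F : finFieldType) (V E : finType)
  (tl hd : E -> V) (S T : 'I_3 -> V) (n' : nat) (alpha : F) :
  prime p -> (0 < m)%N -> p \in [pchar F] -> #|{: F}| = (p ^ m)%N ->
  acyclic tl hd -> injective S -> injective T ->
  (forall i : 'I_3, is_mincut tl hd (S i) (T i) 1) ->
  (forall i j : 'I_3, exists k, is_mincut tl hd (S i) (T j) k /\ (1 <= k)%N) ->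
  (n'.*2.+1).-primitive_root alpha ->
  forall i j : 'I_3, \det (Mhat tl hd S T (n'.*2.+1) alpha i j) != 0.
Proof.
move=> _ _ _ _ acyc _ _ _ mincut prim i j.
have [[//|e s] es] : exists s, is_path tl hd (S i) (T j) s.
  by have [k [cut k_gt0]] := mincut i j; exact: mincut_path cut k_gt0.
rewrite det_diag; apply/prodf_neq0 => a _; rewrite mxE.
have alpha_a_neq0 : alpha ^+ a != 0 by rewrite expf_neq0 ?(prim_root_neq0 prim).
apply: contra_neq (expf_neq0 ((size s).+2 - dmin tl hd S T) alpha_a_neq0).
move/(congr1 (meval (lec_indicator F (path_lec i j e s)))).
by rewrite -horner_map Mtf_on_path // hornerXn /= mevalC meval0.
Qed.
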